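(* Let $G=(V,E)$ be a complete hypergraph with $n:=|V|$, let $J\subseteq V$, and let $j\notin V$. Then: (i) replacing, in the expression $\ell_n(J,V\setminus J)$, each variable $z_p$ ($p\in\{\emptyset\}\cup V\cup E$, where $p\in V$ means the singleton $\{p\}$) by $z_{p\cup\{j\}}$ yields exactly $\ell_{n+1}(J\cup\{j\},V\setminus J)$; (ii) replacing each such $z_p$ by $z_p-z_{p\cup\{j\}}$ yields exactly $\ell_{n+1}(J,(V\cup\{j\})\setminus J)$. Consequently the inequality $\ell_n(J,V\setminus J)\ge0$ becomes $\ell_{n+1}(J\cup\{j\},V\setminus J)\ge0$ under (i), and $\ell_{n+1}(J,(V\cup\{j\})\setminus J)\ge0$ under (ii).
   Context: A hypergraph $G=(V,E)$ is complete if $E$ consists of all subsets of $V$ of cardinality at least two. Variables are indexed by subsets $S$ of $V\cup\{j\}$: $z_\emptyset:=1$, $z_{\{k\}}=z_k$, and $z_S$ for $|S|\ge2$. For disjoint $J_1,J_2$ with $|J_1\cup J_2|=d$, $\ell_d(J_1,J_2):=\sum_{t\subseteq J_2}(-1)^{|t|}z_{J_1\cup t}$. *)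

From mathcomp Require Import all_boot all_order all_algebra.
Set Implicit Arguments. Unset Strict Implicit. Unset Printing Implicit Defensive.
Import Order.TTheory GRing.Theory Num.Theory.
Local Open Scope ring_scope.

(* Variables z_S are indexed by finite subsets S of a ground finType U;
   a linear expression in the z's is represented by its value on an
   arbitrary assignment z : {set U} -> R (z set0 plays the role of z_emptyset,
   treated as a formal symbol so that substitutions may act on it).
   ell J1 J2 z = \sum_{t \subseteq J2} (-1)^{|t|} z_{J1 \cup t}.
   The subscript d = |J1 \cup J2| of the paper is determined by J1, J2. *)
Definition ell (R : ringType) (U : finType) (J1 J2 : {set U}) (z : {set U} -> R) : R :=
  \sum_(t in powerset J2) (-1) ^+ #|t| * z (J1 :|: t).

Definition subst1 (R : ringType) (U : finType) (j : U) (z : {set U} -> R) : {set U} -> R :=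
  fun p => z (p :|: [set j]).

Definition subst2 (R : ringType) (U : finType) (j : U) (z : {set U} -> R) : {set U} -> R :=
  fun p => z p - z (p :|: [set j]).

From mathcomp Require Import all_boot all_order all_algebra.
Import Order.TTheory GRing.Theory Num.Theory.
Local Open Scope ring_scope.

(* Substitution (i) only moves j into the fixed part of every index, so it
   turns ell(J, W) into ell(J + j, W).  For (ii), splitting the subsets of
   W + j according to whether they contain j gives the recurrence
   ell(J, W + j) = ell(J, W) - ell(J + j, W); since ell is linear in z, the
   right-hand side is ell(J, W) evaluated at z minus substitution (i) of z,
   which is substitution (ii). *)

Lemma big_powersetU1 (U : finType) (j : U) (W : {set U}) (R : Type) (idx : R)
    (op : Monoid.com_law idx) (F : {set U} -> R) :
  j \notin W ->
  \big[op/idx]_(t in powerset (j |: W)) F t =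
  op (\big[op/idx]_(t in powerset W) F t) (\big[op/idx]_(t in powerset W) F (j |: t)).
Proof.
move=> jW; rewrite (@bigID _ _ op _ _ (fun t : {set U} => j \in t)) /= Monoid.mulmC.
congr (op _ _); first by apply: eq_bigl => t; rewrite !powersetE -subsetD1 setU1K.
rewrite (reindex_onto (fun t => j |: t) (fun t => t :\ j)) /=; last first.
  by move=> t /andP[_ /setD1K].
apply: eq_bigl => t; rewrite !powersetE setU11 andbT.
apply/andP/idP => [[tjW /eqP <-]|tW]; first by rewrite -(setU1K jW) setSD.
have jt : j \notin t by apply: contra jW => /(subsetP tW).
by rewrite setU1K // setUS.
Qed.

Section Ell.
Variables (R : nzRingType) (U : finType).
Implicit Types (j : U) (J W : {set U}) (z : {set U} -> R).

Lemma ellB J W z1 z2 : ell J W (fun p => z1 p - z2 p) = ell J W z1 - ell J W z2.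
Proof. by rewrite /ell -sumrB; apply: eq_bigr => t _; rewrite mulrBr. Qed.

Lemma ell_subst1 j J W z : ell J W (subst1 j z) = ell (J :|: [set j]) W z.
Proof. by apply: eq_bigr => t _; rewrite /subst1 setUAC. Qed.

Lemma ell_setU1 j J W z :
  j \notin W -> ell J (j |: W) z = ell J W z - ell (J :|: [set j]) W z.
Proof.
move=> jW; rewrite /ell big_powersetU1 // -sumrN; congr (_ + _).
apply: eq_bigr => t; rewrite powersetE => tW.
have jt : j \notin t by apply: contra jW => /(subsetP tW).
by rewrite cardsU1 jt exprS mulN1r mulNr setUA.
Qed.

Lemma ell_subst2 j J W z : j \notin W -> ell J W (subst2 j z) = ell J (j |: W) z.
Proof. by move=> jW; rewrite ell_setU1 // -ell_subst1 -ellB. Qed.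

End Ell.

Theorem lemma5 (R : realDomainType) (U : finType) (V J : {set U}) (j : U) :
  J \subset V -> j \notin V ->
  [/\ (forall z : {set U} -> R,
         ell J (V :\: J) (subst1 j z) = ell (J :|: [set j]) (V :\: J) z),
      (forall z : {set U} -> R,
         ell J (V :\: J) (subst2 j z) = ell J ((V :|: [set j]) :\: J) z),
      (forall z : {set U} -> R,
         (0 <= ell J (V :\: J) (subst1 j z)) = (0 <= ell (J :|: [set j]) (V :\: J) z))
    & (forall z : {set U} -> R,
         (0 <= ell J (V :\: J) (subst2 j z)) = (0 <= ell J ((V :|: [set j]) :\: J) z))].
Proof.
move=> JV jV.
have jJ : j \notin J by apply: contra jV => /(subsetP JV).
have jVJ : j \notin V :\: J by rewrite inE (negbTE jV) andbF.
have -> : (V :|: [set j]) :\: J = j |: (V :\: J).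
  by rewrite setDUl setUC (setDidPl _) // disjoints1.
by split=> z; rewrite ?ell_subst1 ?ell_subst2.
Qed.
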